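(* Let $\rho,\sigma,\gamma$ be qubit density matrices written in the energy eigenbasis as $\rho=\begin{pmatrix} r & a \\ \bar{a} & 1-r\end{pmatrix}$, $\sigma=\begin{pmatrix} s & b \\ \bar{b} & 1-s\end{pmatrix}$, $\gamma=\begin{pmatrix} g & 0 \\ 0 & 1-g\end{pmatrix}$, with diagonal vectors $\mathbf{r}=(r,1-r)^T$, $\mathbf{s}=(s,1-s)^T$, $\mathbf{g}=(g,1-g)^T$, and suppose $a\neq 0$ and $g\neq\frac12$. Then, for $\mathbf{r}\neq \mathbf{g}$, $(\rho,\gamma)\xrightarrow{{\rm GPC}}(\sigma,\gamma)$ if and only if $(\mathbf{r},\mathbf{g})\succ (\mathbf{s},\mathbf{g})$ and \[ \frac{|b|^2}{|a|^2}\leq\frac{\det\begin{pmatrix} s & 1-r \\ g & 1-g\end{pmatrix}\det\begin{pmatrix} r & 1-s \\ g & 1-g\end{pmatrix}}{\left(r-g\right)^2}. \] For $\mathbf{r}=\mathbf{g}$, $(\rho,\gamma)\xrightarrow{{\rm GPC}}(\sigma,\gamma)$ if and only if $\mathbf{s}=\mathbf{g}$ and $|a|\geq |b|$.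
   Context: Setting: a qubit system $A$ with a well-defined (non-degenerate) Hamiltonian $H^A$ and inverse temperature $\beta$; $\gamma=e^{-\beta H^A}/{\rm Tr}[e^{-\beta H^A}]$ is the Gibbs state, diagonal in the energy eigenbasis $\{|0\rangle,|1\rangle\}$. An athermality state is a pair $(\rho,\gamma)$. ${\rm GPC}$ denotes the set of Gibbs-preserving covariant channels: quantum channels $\mathcal{E}$ with $\mathcal{E}(\gamma)=\gamma$ that are time-translation covariant, i.e. $\mathcal{E}(e^{-iH^At}\rho e^{iH^At})=e^{-iH^At}\mathcal{E}(\rho)e^{iH^At}$ for all $t\in\mathbb{R}$. The notation $(\rho,\gamma)\xrightarrow{{\rm GPC}}(\sigma,\gamma)$ means there exists $\mathcal{E}\in{\rm GPC}$ with $\mathcal{E}(\rho)=\sigma$. Relative majorization $(\mathbf{r},\mathbf{g})\succ(\mathbf{s},\mathbf{g})$ means there exists a column stochastic matrix $E$ with $E\mathbf{r}=\mathbf{s}$ and $E\mathbf{g}=\mathbf{g}$. (The cases $a=0$ or $g=\frac12$ reduce to the quasi-classical regime and are excluded.) *)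

From mathcomp Require Import all_boot all_order all_algebra.
From mathcomp Require Import reals sequences exp trigo.
From mathcomp Require Import complex.
Set Implicit Arguments. Unset Strict Implicit. Unset Printing Implicit Defensive.
Import Order.TTheory GRing.Theory Num.Theory.
Local Open Scope ring_scope.
Local Open Scope complex_scope.

Section QubitDefs.
Variable R : realType.
Local Notation C := R[i].

Definition adj m n (A : 'M[C]_(m, n)) : 'M[C]_(n, m) := \matrix_(i, j) (A j i)^*.

Definition psd n (X : 'M[C]_n) : Prop :=
  forall v : 'cV[C]_n, 0 <= (adj v *m X *m v) 0 0.

Definition density (X : 'M[C]_2) : Prop := psd X /\ \tr X = 1.

Definition qmat (p : R) (c : C) : 'M[C]_2 :=
  \matrix_(i < 2, j < 2)
    match val i, val j with
    | 0%N, 0%N => p%:C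
    | 0%N, _ => c
    | _, 0%N => c^*
    | _, _ => (1 - p)%:C
    end.

Definition vec2 (x : R) : 'cV[R]_2 :=
  \col_(i < 2) (if val i == 0%N then x else 1 - x).

(* Hamiltonian H^A = diag(E0, E1); Gibbs state gamma = e^{-beta H}/Tr e^{-beta H}
   = diag(g, 1-g) with g below *)
Definition gibbs_g (beta E0 E1 : R) : R :=
  expR (- beta * E0) / (expR (- beta * E0) + expR (- beta * E1)).

Definition gibbs (beta E0 E1 : R) : 'M[C]_2 := qmat (gibbs_g beta E0 E1) 0.

Definition expi (x : R) : C := Complex (cos x) (sin x).

Definition evol (E0 E1 t : R) : 'M[C]_2 :=
  \matrix_(i < 2, j < 2)
    if i == j then expi (- (if val i == 0%N then E0 else E1) * t) else 0.

(* Complete positivity: for every n, id_n (x) E is positive; an operator on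
   C^n (x) C^2 is written as the n x n block family X i j of 2x2 blocks. *)
Definition linear_map (E : 'M[C]_2 -> 'M[C]_2) : Prop :=
  forall (c : C) (X Y : 'M[C]_2), E (c *: X + Y) = c *: E X + E Y.

Definition trace_preserving (E : 'M[C]_2 -> 'M[C]_2) : Prop :=
  forall X, \tr (E X) = \tr X.

Definition block_psd n (X : 'I_n -> 'I_n -> 'M[C]_2) : Prop :=
  forall v : 'I_n -> 'cV[C]_2,
    0 <= \sum_(i < n) \sum_(j < n) (adj (v i) *m X i j *m v j) 0 0.

Definition completely_positive (E : 'M[C]_2 -> 'M[C]_2) : Prop :=
  forall (n : nat) (X : 'I_n -> 'I_n -> 'M[C]_2),
    block_psd X -> block_psd (fun i j => E (X i j)).

Definition channel (E : 'M[C]_2 -> 'M[C]_2) : Prop :=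
  [/\ linear_map E, trace_preserving E & completely_positive E].

Definition time_covariant (E0 E1 : R) (E : 'M[C]_2 -> 'M[C]_2) : Prop :=
  forall (t : R) (X : 'M[C]_2),
    E (evol E0 E1 t *m X *m adj (evol E0 E1 t))
    = evol E0 E1 t *m E X *m adj (evol E0 E1 t).

Definition GPC (beta E0 E1 : R) (E : 'M[C]_2 -> 'M[C]_2) : Prop :=
  [/\ channel E, E (gibbs beta E0 E1) = gibbs beta E0 E1 & time_covariant E0 E1 E].

Definition GPC_convertible (beta E0 E1 : R) (rho sigma : 'M[C]_2) : Prop :=
  exists E, GPC beta E0 E1 E /\ E rho = sigma.

Definition col_stochastic (M : 'M[R]_2) : Prop :=
  (forall i j, 0 <= M i j) /\ (forall j, \sum_(i < 2) M i j = 1).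

Definition rel_maj (r s g : 'cV[R]_2) : Prop :=
  exists M : 'M[R]_2, col_stochastic M /\ M *m r = s /\ M *m g = g.

End QubitDefs.

From mathcomp Require Import all_boot all_order all_algebra.
From mathcomp Require Import reals sequences exp trigo.
From mathcomp Require Import complex.
From mathcomp Require Import ring lra.
Import Order.TTheory GRing.Theory Num.Theory.
Local Open Scope ring_scope.
Local Open Scope complex_scope.
Set Implicit Arguments. Unset Strict Implicit. Unset Printing Implicit Defensive.

(* Conjugation by the free evolution multiplies the entry X_kl by
   e^{i (l - k) (E1 - E0) t}; since E0 <> E1, a covariant linear map must
   preserve the three bands l - k = -1, 0, 1. It therefore acts on the
   populations by a matrix P and on the two coherences by scalars c and d.
   Positivity of its Choi matrix makes P nonnegative with d = c^* and
   |c|^2 <= P00 P11, trace preservation makes P column stochastic, and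
   conversely every such map is completely positive: completing the square
   in the coherence writes P00 times its block form as a nonnegative
   combination of block forms of the input. Hence (rho, gamma) can
   be converted to (sigma, gamma) iff some column-stochastic M fixes g and
   maps r to s while some c with |c|^2 <= M00 M11 maps a to b. If r <> g
   these two linear conditions determine M, and M00 M11 is the stated ratio
   of determinants; if r = g they force s = g and leave only |c| <= 1. *)

Section CovariantQubitChannels.
Variable R : realType.
Local Notation C := R[i].
Local Notation i0 := (@ord0 1).
Local Notation i1 := (@ord_max 1).
(* Reopened so that [x^*] is [Num.conj] (the conjugation of the
   numClosedFieldType [C]) rather than [conjc]. *)
Local Open Scope ring_scope.
Implicit Types (M : 'M[R]_2) (P X : 'M[C]_2) (c d : C).

Lemma sum_ord2 (V : nmodType) (F : 'I_2 -> V) : \sum_(i < 2) F i = F i0 + F i1.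
Proof. by rewrite big_ord_recr big_ord1; congr (F _ + F _); apply: val_inj. Qed.

Lemma ord2P (i : 'I_2) : i = i0 \/ i = i1.
Proof. by case: i => [[|[|//]] Hi]; [left|right]; apply: val_inj. Qed.

Lemma form2E (u w : 'cV[C]_2) (Y : 'M[C]_2) : (adj u *m Y *m w) 0 0 =
  (u i0 0)^* * (Y i0 i0 * w i0 0 + Y i0 i1 * w i1 0) +
  (u i1 0)^* * (Y i1 i0 * w i0 0 + Y i1 i1 * w i1 0).
Proof. by rewrite !mxE !sum_ord2 !mxE !sum_ord2 !mxE; ring. Qed.

Lemma conjCR (x : R) : (x%:C)^* = x%:C :> C.
Proof. exact: conjc_real. Qed.

Lemma normc_ge0 (z : C) : 0 <= Normc.normc z.
Proof. by case: z => x y; exact: sqrtr_ge0. Qed.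

Lemma normc_sqr (z : C) : (Normc.normc z ^+ 2)%:C = z * z^*.
Proof. by rewrite rmorphXn /= -sqr_normc. Qed.

Lemma normc_ratio (a b c : C) : a != 0 -> c * a = b ->
  Normc.normc b ^+ 2 / Normc.normc a ^+ 2 = Normc.normc c ^+ 2.
Proof.
move=> a_neq0 <-; rewrite Normc.normcM exprMn mulfK // sqrf_eq0.
by apply: contra a_neq0 => /eqP /Normc.eq0_normc ->.
Qed.

Lemma normc_le1 (a b c : C) : a != 0 -> c * a = b ->
  (Normc.normc c <= 1) = (Normc.normc b <= Normc.normc a).
Proof.
move=> a_neq0 <-; rewrite Normc.normcM ger_pMl // lt_def normc_ge0 andbT.
by apply: contra a_neq0 => /eqP /Normc.eq0_normc ->.
Qed.

Lemma expiD (x y : R) : expi (x + y) = expi x * expi y :> C.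
Proof. by rewrite /expi; simpc; rewrite cosD sinD; congr Complex; ring. Qed.

Lemma conjc_expi (x : R) : conjc (expi x) = expi (- x).
Proof. by rewrite /expi cosN sinN. Qed.

Lemma expi0 : expi 0 = 1 :> C.
Proof. by rewrite /expi cos0 sin0. Qed.

Lemma sin_pihalf_ord (k l : 'I_2) : sin ((l%:R - k%:R) * (pi / 2)) = l%:R - k%:R :> R.
Proof.
case: (ord2P k) => ->; case: (ord2P l) => -> /=; rewrite ?(mulr0n, mulr1n).
- by rewrite subrr mul0r sin0.
- by rewrite subr0 mul1r sin_pihalf.
- by rewrite sub0r mulN1r sinN sin_pihalf.
- by rewrite subrr mul0r sin0.
Qed.

Definition phase_shift (t : R) X : 'M[C]_2 :=
  \matrix_(i, j) (expi ((j%:R - i%:R) * t) * X i j).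

Lemma evol_conjE E0 E1 t X :
  evol E0 E1 t *m X *m adj (evol E0 E1 t) = phase_shift ((E1 - E0) * t) X.
Proof.
apply/matrixP => k l; rewrite !mxE !sum_ord2 !mxE !sum_ord2 !mxE.
rewrite !(fun_if conjc) conjc0 !conjc_expi.
case: (ord2P k) => ->; case: (ord2P l) => -> /=.
all: rewrite !(mulr0, mul0r, addr0, add0r) mulrAC -expiD.
all: by congr (expi _ * _); ring.
Qed.

Lemma phase_shift_delta t (k l : 'I_2) :
  phase_shift t (delta_mx k l) = expi ((l%:R - k%:R) * t) *: delta_mx k l.
Proof.
apply/matrixP => i j; rewrite !mxE.
by case: eqP => [->|]; case: eqP => [->|] //= _; rewrite ?mulr0 ?mulr1.
Qed.

Definition cov_map P c d X : 'M[C]_2 :=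
  \matrix_(i, j) if i == j then \sum_k P i k * X k k
                 else (if i == i0 then c else d) * X i j.

Definition real_mx M : 'M[C]_2 := \matrix_(i, j) (M i j)%:C.

Lemma real_mxE M i j : real_mx M i j = (M i j)%:C.
Proof. exact: mxE. Qed.

Lemma cov_map_linear P c d : linear_map (cov_map P c d).
Proof.
move=> k X Y; apply/matrixP => i j; rewrite !mxE.
case: eqP => _; last by ring.
by rewrite !sum_ord2 !mxE; ring.
Qed.

Lemma cov_map_covariant E0 E1 P c d : time_covariant E0 E1 (cov_map P c d).
Proof.
move=> t X; rewrite !evol_conjE; apply/matrixP => i j; rewrite !mxE.
case: eqP => [<-|_]; last by rewrite mulrCA.
rewrite subrr mul0r expi0 mul1r.
by apply: eq_bigr => k _; rewrite mxE subrr mul0r expi0 mul1r.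
Qed.

Lemma trace_cov_map P c d X :
  \tr (cov_map P c d X) = \sum_k (\sum_i P i k) * X k k.
Proof.
rewrite /mxtrace; under eq_bigr => i _ do rewrite mxE eqxx.
by rewrite exchange_big; apply: eq_bigr => k _; rewrite mulr_suml.
Qed.

Lemma cov_map_trace_preservingP P c d :
  trace_preserving (cov_map P c d) <-> forall k, \sum_i P i k = 1.
Proof.
split => [P_tp k | P_col X]; rewrite ?trace_cov_map.
  have := P_tp (delta_mx k k); rewrite trace_cov_map /mxtrace !sum_ord2 !mxE.
  by case: (ord2P k) => -> /=; rewrite ?(mulr1n, mulr0n, mulr1, mulr0, addr0, add0r).
by apply: eq_bigr => k _; rewrite P_col mul1r.
Qed.

(* [block_psd X] unfolds to [forall v, 0 <= block_form X v]. *)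
Definition block_form n (X : 'I_n -> 'I_n -> 'M[C]_2) (v : 'I_n -> 'cV[C]_2) : C :=
  \sum_(i < n) \sum_(j < n) (adj (v i) *m X i j *m v j) 0 0.

Definition col2 (x y : C) : 'cV[C]_2 := \col_k (if k == i0 then x else y).

Section CovMapBlockForm.
Variables (M : 'M[R]_2) (n : nat) (X : 'I_n -> 'I_n -> 'M[C]_2) (v : 'I_n -> 'cV[C]_2).
Let x i := v i i0 0.
Let y i := v i i1 0.
Let Q w := block_form X w.
Let m k l := (M k l)%:C.

Lemma block_form_cov_map c :
  m i0 i0 * block_form (fun i j => cov_map (real_mx M) c c^* (X i j)) v =
  m i0 i0 * m i0 i1 * Q (fun i => col2 0 (x i)) +
  m i0 i0 * m i1 i0 * Q (fun i => col2 (y i) 0) +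
  Q (fun i => col2 (m i0 i0 * x i) (c * y i)) +
  (m i0 i0 * m i1 i1 - c * c^*) * Q (fun i => col2 0 (y i)).
Proof.
rewrite /Q /block_form !mulr_sumr -!big_split; apply: eq_bigr => i _.
rewrite !mulr_sumr -!big_split; apply: eq_bigr => j _.
rewrite !form2E !mxE !sum_ord2 !mxE /= /x /y /m.
by rewrite !rmorph0 !rmorphM /= !conjCR; ring.
Qed.

Lemma block_form_cov_map0 :
  block_form (fun i j => cov_map (real_mx M) 0 0 (X i j)) v =
  m i0 i0 * Q (fun i => col2 (x i) 0) + m i0 i1 * Q (fun i => col2 0 (x i)) +
  m i1 i0 * Q (fun i => col2 (y i) 0) + m i1 i1 * Q (fun i => col2 0 (y i)).
Proof.
rewrite /Q /block_form !mulr_sumr -!big_split; apply: eq_bigr => i _.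
rewrite !mulr_sumr -!big_split; apply: eq_bigr => j _.
rewrite !form2E !mxE !sum_ord2 !mxE /= /x /y /m.
by rewrite !rmorph0; ring.
Qed.
End CovMapBlockForm.

Lemma cov_map_cp M c : (forall i j, 0 <= M i j) ->
  Normc.normc c ^+ 2 <= M i0 i0 * M i1 i1 ->
  completely_positive (cov_map (real_mx M) c c^*).
Proof.
move=> M_ge0 c_le n X X_psd v.
change (0 <= block_form (fun i j => cov_map (real_mx M) c c^* (X i j)) v).
have [M00_0 | M00_neq0] := eqVneq (M i0 i0) 0.
  have -> : c = 0.
    apply: Normc.eq0_normc; apply/eqP; rewrite -sqrf_eq0 eq_le sqr_ge0 andbT.
    by rewrite M00_0 mul0r in c_le.
  rewrite rmorph0 block_form_cov_map0.
  by rewrite !addr_ge0 ?mulr_ge0 ?X_psd ?ler0c ?M_ge0.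
have M00_gt0 : 0 < (M i0 i0)%:C by rewrite ltcR lt_def M00_neq0 M_ge0.
rewrite -(pmulr_rge0 _ M00_gt0) block_form_cov_map.
have -> : (M i0 i0)%:C * (M i1 i1)%:C - c * c^* =
          (M i0 i0 * M i1 i1 - Normc.normc c ^+ 2)%:C.
  by rewrite rmorphB rmorphM /= normc_sqr.
by rewrite !addr_ge0 ?mulr_ge0 ?X_psd ?ler0c ?M_ge0 ?subr_ge0.
Qed.

Lemma cov_map_channel M c : col_stochastic M ->
  Normc.normc c ^+ 2 <= M i0 i0 * M i1 i1 -> channel (cov_map (real_mx M) c c^*).
Proof.
case=> M_ge0 M_col c_le; split; [exact: cov_map_linear | | exact: cov_map_cp].
apply/cov_map_trace_preservingP => k.
by under eq_bigr do rewrite real_mxE; rewrite -rmorph_sum M_col.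
Qed.

Section LinearMap.
Variable E : 'M[C]_2 -> 'M[C]_2.
Hypothesis E_linear : linear_map E.

Lemma linear_map0 : E 0 = 0.
Proof.
have := E_linear 1 0 0; rewrite !scale1r !addr0 => E00.
by apply: (@addrI _ (E 0)); rewrite addr0 -E00.
Qed.

Lemma linear_mapD X Y : E (X + Y) = E X + E Y.
Proof. by have := E_linear 1 X Y; rewrite !scale1r. Qed.

Lemma linear_mapZ a X : E (a *: X) = a *: E X.
Proof. by have := E_linear a X 0; rewrite !addr0 linear_map0 addr0. Qed.

Lemma linear_map_entry X i j :
  E X i j = \sum_k \sum_l X k l * E (delta_mx k l) i j.
Proof.
rewrite {1}(matrix_sum_delta X) (big_morph E linear_mapD linear_map0) summxE.
apply: eq_bigr => k _; rewrite (big_morph E linear_mapD linear_map0) summxE.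
by apply: eq_bigr => l _; rewrite linear_mapZ mxE.
Qed.
End LinearMap.

Section Covariance.
Variables (E0 E1 : R) (E : 'M[C]_2 -> 'M[C]_2).
Hypotheses (E0_neq_E1 : E0 != E1) (E_linear : linear_map E)
  (E_covariant : time_covariant E0 E1 E).

Lemma covariant_phase_shift t X : E (phase_shift t X) = phase_shift t (E X).
Proof.
have -> : t = (E1 - E0) * (t / (E1 - E0)) by rewrite mulrC divfK // subr_eq0 eq_sym.
by rewrite -!evol_conjE E_covariant.
Qed.

Lemma covariant_delta_eq0 (k l i j : 'I_2) :
  (l + i != j + k)%N -> E (delta_mx k l) i j = 0.
Proof.
move=> neq; apply/eqP; apply: contraNT neq => Ekl_neq0.
(* at t = pi/2 the band l - k is read off as the imaginary part of its phase *)
have := congr1 (fun Y : 'M[C]_2 => Y i j) (covariant_phase_shift (pi / 2) (delta_mx k l)).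
rewrite phase_shift_delta linear_mapZ // !mxE => /(mulIf Ekl_neq0).
move=> /(congr1 (@complex.Im R)) /=; rewrite !sin_pihalf_ord => eq_band.
by rewrite -(eqr_nat R) !natrD; apply/eqP; lra.
Qed.

Lemma covariant_entry X i j : E X i j =
  \sum_(k < 2) \sum_(l < 2)
    (if (l + i == j + k)%N then X k l * E (delta_mx k l) i j else 0).
Proof.
rewrite linear_map_entry //; apply: eq_bigr => k _; apply: eq_bigr => l _.
by case: ifPn => // /covariant_delta_eq0 ->; rewrite mulr0.
Qed.

Lemma covariant_linear_map_eq : E = cov_map (\matrix_(i, k) E (delta_mx k k) i i)
  (E (delta_mx i0 i1) i0 i1) (E (delta_mx i1 i0) i1 i0).
Proof.
apply: boolp.funext => X; apply/matrixP => i j; rewrite covariant_entry !mxE.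
by case: (ord2P i) => ->; case: (ord2P j) => -> /=; rewrite !sum_ord2 /= ?mxE; ring.
Qed.
End Covariance.

Lemma psd2_form (p q c d : C) :
  (forall x y : C, 0 <= x^* * p * x + y^* * q * y + x^* * c * y + y^* * d * x) ->
  [/\ 0 <= p, 0 <= q, d = c^* & c * c^* <= p * q].
Proof.
move=> form_ge0.
have p_ge0 : 0 <= p.
  by have := form_ge0 1 0; rewrite rmorph1 rmorph0 !(mul1r, mulr1, mul0r, mulr0, addr0).
have q_ge0 : 0 <= q.
  have := form_ge0 0 1.
  by rewrite rmorph1 rmorph0 !(mul1r, mulr1, mul0r, mulr0, addr0, add0r).
have d_eq : d = c^*.
  move: (ger0_Im (form_ge0 1 1)) (ger0_Im (form_ge0 1 'i)).
  move: (ger0_Im p_ge0) (ger0_Im q_ge0); rewrite rmorph1 !(mul1r, mulr1).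
  case: p q c d {form_ge0 p_ge0 q_ge0} => [p1 p2] [q1 q2] [c1 c2] [d1 d2] /=.
  move=> p2_0 q2_0 Im_1 Im_i.
  by apply/eqP; rewrite eq_complex /=; apply/andP; split; apply/eqP; lra.
split => //; subst d.
have [pr pE] : exists pr, p = pr%:C.
  by exists (complex.Re p); apply/esym/RRe_real/ger0_real.
have [qr qE] : exists qr, q = qr%:C.
  by exists (complex.Re q); apply/esym/RRe_real/ger0_real.
subst p q; rewrite !ler0c in p_ge0 q_ge0.
have [n [nE n_ge0]] : exists n : R, n%:C = c * c^* /\ 0 <= n.
  by exists (Normc.normc c ^+ 2); rewrite normc_sqr sqr_ge0.
have real_form x y (z : R) :
    x^* * pr%:C * x + y^* * qr%:C * y + x^* * c * y + y^* * c^* * x = z%:C -> 0 <= z.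
  by move=> e; rewrite -ler0c -e form_ge0.
have h1 : 0 <= qr * (pr * qr - n).
  apply: (real_form qr%:C (- c^*)).
  by rewrite rmorphN /= conjCK conjCR rmorphM rmorphB rmorphM /= nE; ring.
have h2 : 0 <= pr * (pr * qr - n).
  apply: (real_form (- c) pr%:C).
  by rewrite rmorphN /= conjCR rmorphM rmorphB rmorphM /= nE; ring.
have h3 : 0 <= pr + n * qr - 2 * n.
  apply: (real_form 1 (- c^*)).
  by rewrite rmorphN rmorph1 /= conjCK rmorphB rmorphD !rmorphM /= nE; ring.
rewrite -nE -rmorphM lecR.
have [pq_gt0 | pq_le0] := ltP 0 (pr + qr).
  by rewrite -subr_ge0 -(pmulr_rge0 _ pq_gt0) mulrDl addr_ge0.
have [pr0 qr0] : pr = 0 /\ qr = 0 by split; lra.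
by move: h3; rewrite pr0 qr0 !mulr0; lra.
Qed.

Lemma choi_block_psd : block_psd (fun i j : 'I_2 => delta_mx i j : 'M[C]_2).
Proof.
move=> v; set z := v i0 i0 0 + v i1 i1 0.
rewrite (_ : \sum_i _ = z * z^*) ?mul_conjC_ge0 //.
by rewrite !sum_ord2 !form2E !mxE /= rmorphD /= /z; ring.
Qed.

Lemma block_form_cov_map_choi P c d (x0 y0 x1 y1 : C) :
  block_form (fun i j => cov_map P c d (delta_mx i j))
    (fun i => if i == i0 then col2 x0 y0 else col2 x1 y1) =
  x0^* * P i0 i0 * x0 + y0^* * P i1 i0 * y0 + x1^* * P i0 i1 * x1 +
  y1^* * P i1 i1 * y1 + x0^* * c * y1 + y1^* * d * x0.
Proof. by rewrite /block_form !sum_ord2 !form2E !mxE /= !sum_ord2 !mxE /=; ring. Qed.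

Lemma cov_map_cp_inv P c d : completely_positive (cov_map P c d) ->
  [/\ forall i k, 0 <= P i k, d = c^* & c * c^* <= P i0 i0 * P i1 i1].
Proof.
move=> P_cp; have choi := P_cp 2 _ choi_block_psd.
have choiE x0 y0 x1 y1 := block_form_cov_map_choi P c d x0 y0 x1 y1.
have [P00_ge0 P11_ge0 -> c_le] : [/\ 0 <= P i0 i0, 0 <= P i1 i1, d = c^* &
    c * c^* <= P i0 i0 * P i1 i1].
  apply: psd2_form => x y.
  have := choi (fun i => if i == i0 then col2 x 0 else col2 0 y).
  by rewrite -/(block_form _ _) choiE rmorph0 !(mul0r, mulr0, addr0).
have P10_ge0 : 0 <= P i1 i0.
  have := choi (fun i => if i == i0 then col2 0 1 else col2 0 0).
  rewrite -/(block_form _ _) choiE rmorph0 rmorph1.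
  by rewrite !(mul0r, mulr0, mul1r, mulr1, addr0, add0r).
have P01_ge0 : 0 <= P i0 i1.
  have := choi (fun i => if i == i0 then col2 0 0 else col2 1 0).
  rewrite -/(block_form _ _) choiE rmorph0 rmorph1.
  by rewrite !(mul0r, mulr0, mul1r, mulr1, addr0, add0r).
by split => // i k; case: (ord2P i) => ->; case: (ord2P k) => ->.
Qed.

Lemma cov_map_channel_inv P c d : channel (cov_map P c d) ->
  exists M, [/\ P = real_mx M, col_stochastic M, d = c^* &
                Normc.normc c ^+ 2 <= M i0 i0 * M i1 i1].
Proof.
case=> _ /cov_map_trace_preservingP P_col /cov_map_cp_inv [P_ge0 -> c_le].
have [M PE] : exists M, P = real_mx M.
  exists (\matrix_(i, k) complex.Re (P i k)).
  by apply/matrixP => i k; rewrite !mxE; apply/esym/RRe_real/ger0_real.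
subst P; exists M; split => //.
  split => [i k | k]; first by have := P_ge0 i k; rewrite real_mxE ler0c.
  apply: (@complexI R); rewrite rmorph_sum rmorph1 -(P_col k).
  by apply: eq_bigr => i _; rewrite real_mxE.
by rewrite -lecR normc_sqr rmorphM /= -!real_mxE.
Qed.

Lemma covariant_channelP E0 E1 E : E0 != E1 ->
  channel E /\ time_covariant E0 E1 E <->
  exists M c, [/\ col_stochastic M, Normc.normc c ^+ 2 <= M i0 i0 * M i1 i1 &
                  E = cov_map (real_mx M) c c^*].
Proof.
move=> E0_neq_E1; split => [[E_channel E_cov] | [M [c [M_st c_le ->]]]].
  have [E_linear _ _] := E_channel.
  have E_eq := covariant_linear_map_eq E0_neq_E1 E_linear E_cov.
  rewrite E_eq in E_channel.
  have [M [P_eq M_st d_eq c_le]] := cov_map_channel_inv E_channel.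
  by exists M, (E (delta_mx i0 i1) i0 i1); split; rewrite // {1}E_eq P_eq d_eq.
by split; [exact: cov_map_channel | exact: cov_map_covariant].
Qed.

Lemma vec2_inj : injective (@vec2 R).
Proof. by move=> x y /(congr1 (fun v : 'cV[R]_2 => v i0 0)); rewrite !mxE. Qed.

Lemma mul_vec2E M r i : (M *m vec2 r) i 0 = M i i0 * r + M i i1 * (1 - r).
Proof. by rewrite !mxE sum_ord2 !mxE. Qed.

Lemma stochastic_mul_vec2 M r s : (forall k, \sum_i M i k = 1) ->
  M *m vec2 r = vec2 s <-> M i0 i0 * r + M i0 i1 * (1 - r) = s.
Proof.
move=> M_col; split => [/(congr1 (fun v : 'cV[R]_2 => v i0 0))|rs].
  by rewrite mul_vec2E mxE.
have := M_col i0; have := M_col i1; rewrite !sum_ord2 => M1 M0.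
apply/matrixP => i j; rewrite ord1 mul_vec2E mxE.
case: (ord2P i) => -> //=; rewrite -rs.
have -> : M i1 i0 = 1 - M i0 i0 by lra.
have -> : M i1 i1 = 1 - M i0 i1 by lra.
by ring.
Qed.

Lemma cov_map_qmat M c r s a b : (forall k, \sum_i M i k = 1) ->
  cov_map (real_mx M) c c^* (qmat r a) = qmat s b <->
  M *m vec2 r = vec2 s /\ c * a = b.
Proof.
move=> M_col; split => [E_rs | [rs <-]].
  have := congr1 (fun Y : 'M[C]_2 => Y i0 i0) E_rs.
  have := congr1 (fun Y : 'M[C]_2 => Y i0 i1) E_rs.
  rewrite !mxE /= !sum_ord2 !mxE /= => -> rs; split => //.
  by apply/stochastic_mul_vec2 => //; apply: (@complexI R); rewrite rmorphD !rmorphM.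
have rs_at i := congr1 (fun v : 'cV[R]_2 => v i 0) rs.
move: (rs_at i0) (rs_at i1); rewrite !mul_vec2E !mxE /= => rs0 rs1.
apply/matrixP => i j; rewrite !mxE.
case: (ord2P i) => ->; case: (ord2P j) => -> /=; rewrite ?sum_ord2 ?mxE /=.
- by rewrite -rs0 -!rmorphM -rmorphD.
- by [].
- by rewrite rmorphM.
- by rewrite -rs1 -!rmorphM -rmorphD.
Qed.

Lemma GPC_convertibleP beta E0 E1 r s a b : E0 != E1 ->
  GPC_convertible beta E0 E1 (qmat r a) (qmat s b) <->
  exists M c, [/\ col_stochastic M, Normc.normc c ^+ 2 <= M i0 i0 * M i1 i1,
    M *m vec2 (gibbs_g beta E0 E1) = vec2 (gibbs_g beta E0 E1),
    M *m vec2 r = vec2 s & c * a = b].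
Proof.
move=> E0_neq_E1; split => [[E [[E_channel E_gibbs E_cov] E_rho]] | ].
  have [M [c [M_st c_le E_eq]]] :=
    (covariant_channelP _ E0_neq_E1).1 (conj E_channel E_cov).
  have [_ M_col] := M_st; rewrite E_eq in E_gibbs E_rho.
  have [Mg _] := (cov_map_qmat _ _ _ _ _ M_col).1 E_gibbs.
  have [Mr ab] := (cov_map_qmat _ _ _ _ _ M_col).1 E_rho.
  by exists M, c.
case=> M [c [M_st c_le Mg Mr ab]]; have [_ M_col] := M_st.
exists (cov_map (real_mx M) c c^*); split; last exact/cov_map_qmat.
split; [exact: cov_map_channel | | exact: cov_map_covariant].
by apply/cov_map_qmat; rewrite ?mulr0.
Qed.

Lemma stochastic_diag_prodE M r s g : (forall k, \sum_i M i k = 1) ->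
  M *m vec2 r = vec2 s -> M *m vec2 g = vec2 g -> r != g ->
  M i0 i0 * M i1 i1 =
  (s * (1 - g) - (1 - r) * g) * (r * (1 - g) - (1 - s) * g) / (r - g) ^+ 2.
Proof.
move=> M_col /(stochastic_mul_vec2 _ _ M_col) Mr /(stochastic_mul_vec2 _ _ M_col) Mg.
move=> r_neq_g; have := M_col i1; rewrite sum_ord2 => M1.
have e0 : s * (1 - g) - (1 - r) * g =
    M i0 i0 * (r - g) + (1 - r) * (M i0 i0 * g + M i0 i1 * (1 - g) - g).
  by rewrite -Mr; ring.
have e1 : r * (1 - g) - (1 - s) * g =
    M i1 i1 * (r - g) + r * (M i0 i0 * g + M i0 i1 * (1 - g) - g).
  by rewrite -Mr (_ : M i1 i1 = 1 - M i0 i1); [ring | lra].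
rewrite e0 e1 Mg subrr !mulr0 !addr0; field.
by rewrite subr_eq0.
Qed.

Lemma col_stochastic1 : col_stochastic (1%:M : 'M[R]_2).
Proof.
split => [i j | j]; first by rewrite mxE ler0n.
by rewrite sum_ord2 !mxE; case: (ord2P j) => -> /=; rewrite ?(mulr1n, mulr0n, addr0, add0r).
Qed.

Lemma col_stochastic_diag_le1 M : col_stochastic M -> M i0 i0 * M i1 i1 <= 1.
Proof.
case=> M_ge0 M_col; have := M_col i0; have := M_col i1; rewrite !sum_ord2 => M1 M0.
have := M_ge0 i0 i0; have := M_ge0 i1 i1; have := M_ge0 i1 i0; have := M_ge0 i0 i1.
nra.
Qed.

End CovariantQubitChannels.

Theorem theorem5 (R : realType) (E0 E1 beta r s : R) (a b : R[i]) :
  E0 != E1 -> 0 < beta ->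
  density (qmat r a) -> density (qmat s b) ->
  a != 0 -> gibbs_g beta E0 E1 != 2^-1 ->
  let g := gibbs_g beta E0 E1 in
  (vec2 r != vec2 g ->
     (GPC_convertible beta E0 E1 (qmat r a) (qmat s b) <->
      rel_maj (vec2 r) (vec2 s) (vec2 g) /\
      Normc.normc b ^+ 2 / Normc.normc a ^+ 2
        <= (s * (1 - g) - (1 - r) * g) * (r * (1 - g) - (1 - s) * g) / (r - g) ^+ 2))
  /\
  (vec2 r = vec2 g ->
     (GPC_convertible beta E0 E1 (qmat r a) (qmat s b) <->
      vec2 s = vec2 g /\ Normc.normc b <= Normc.normc a)).
Proof.
move=> E0_neq_E1 _ _ _ a_neq0 _ g.
rewrite /rel_maj (GPC_convertibleP _ _ _ _ _ E0_neq_E1).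
have ba_a : b / a * a = b by rewrite divfK.
split => [r_neq_g | /vec2_inj r_eq_g].
  have rg : r != g by apply: contra_neq r_neq_g => ->.
  split => [[M [c [M_st c_le Mg Mr ab]]] | [[M [M_st [Mr Mg]]] b_le]].
    split; first by exists M.
    by rewrite (normc_ratio a_neq0 ab) -(stochastic_diag_prodE M_st.2 Mr Mg rg).
  exists M, (b / a); split => //.
  by rewrite -(normc_ratio a_neq0 ba_a) (stochastic_diag_prodE M_st.2 Mr Mg rg).
split => [[M [c [M_st c_le Mg Mr ab]]] | [/vec2_inj s_eq_g b_le]].
  split; first by rewrite -Mr r_eq_g.
  rewrite -(normc_le1 a_neq0 ab) -(expr_le1 (n := 2)) ?normc_ge0 //.
  exact: le_trans c_le (col_stochastic_diag_le1 M_st).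
exists 1%:M, (b / a); split; rewrite ?mul1mx ?r_eq_g ?s_eq_g //.
- exact: col_stochastic1.
- by rewrite !mxE mulr1 expr_le1 ?normc_ge0 // (normc_le1 a_neq0 ba_a).
Qed.
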